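(* Let $(\mathcal{C},d,\eta)$ be a symmetric monoidal anti-involutive category which has duals, and let $(\cdot)^*\colon\mathcal{C}\to\mathcal{C}^{\mathrm{op}}$ be a choice of dual functor. Then the canonical monoidal natural isomorphism $d\circ(\cdot)^*\Rightarrow(\cdot)^*\circ d$ (given by uniqueness of duals) makes $(\cdot)^*$ into an anti-involutive functor $(\mathcal{C},d,\eta)\to(\mathcal{C}^{\mathrm{op}},d,\eta^{-1})$.
   Context: A symmetric monoidal anti-involutive category: a symmetric monoidal category $\mathcal{C}$ with a symmetric monoidal functor $d\colon\mathcal{C}\to\mathcal{C}^{\mathrm{op}}$ and a monoidal natural isomorphism $\eta\colon\mathrm{id}\Rightarrow d^2$ with $d(\eta_x)\circ\eta_{dx}=\mathrm{id}_{dx}$. $\mathcal{C}^{\mathrm{op}}$ carries the anti-involution $d$ with $\eta$ inverted. An anti-involutive functor $(F,\phi)\colon(\mathcal{C}_1,d_1,\eta_1)\to(\mathcal{C}_2,d_2,\eta_2)$ is a functor with a natural isomorphism $\phi\colon F\circ d_1\Rightarrow d_2\circ F$ such that $\phi_{d_1x}\circ F((\eta_1)_x)=d_2(\phi_x)\circ(\eta_2)_{F(x)}$. A dual functor is obtained by choosing for each $x$ a dual $(x^*,\mathrm{ev}_x\colon x^*\otimes x\to1,\mathrm{coev}_x\colon1\to x\otimes x^* )$; $f^*$ is the unique morphism with $\mathrm{ev}_x\circ(f^*\otimes\mathrm{id})=\mathrm{ev}_y\circ(\mathrm{id}\otimes f)$ for $f\colon x\to y$, and the monoidal structure uses the braiding.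 Since the symmetric monoidal functor $d$ carries duality data to duality data, $d(x^* )$ and $(dx)^*$ are both duals of $dx$; the canonical isomorphism between them compatible with evaluations and coevaluations is the uniqueness-of-duals isomorphism. *)

(* Morphism equality is Leibniz equality. *)

Declare Scope cat_scope.
Open Scope cat_scope.

Record Cat : Type := {
  ob :> Type;
  hom : ob -> ob -> Type;
  idm : forall a : ob, hom a a;
  comp : forall a b c : ob, hom b c -> hom a b -> hom a c;
  comp_idl : forall a b (f : hom a b), comp _ _ _ (idm b) f = f;
  comp_idr : forall a b (f : hom a b), comp _ _ _ f (idm a) = f;
  comp_assoc : forall a b c e (f : hom a b) (g : hom b c) (h : hom c e),
      comp _ _ _ h (comp _ _ _ g f) = comp _ _ _ (comp _ _ _ h g) f
}.

Arguments hom {_} _ _.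
Arguments idm {_} _.
Arguments comp {_ _ _ _} _ _.

Notation "g ∘ f" := (comp g f) (at level 40, left associativity) : cat_scope.

Class SMC (C : Cat) := {
  tens : C -> C -> C;
  tensm : forall {a b c e : C}, hom a b -> hom c e -> hom (tens a c) (tens b e);
  tensm_id : forall a b : C, tensm (idm a) (idm b) = idm (tens a b);
  tensm_comp : forall (a b c a' b' c' : C) (f : hom a b) (g : hom b c)
      (f' : hom a' b') (g' : hom b' c'),
      tensm (g ∘ f) (g' ∘ f') = tensm g g' ∘ tensm f f';
  unit : C;
  assoc : forall a b c : C, hom (tens (tens a b) c) (tens a (tens b c));
  assoc_inv : forall a b c : C, hom (tens a (tens b c)) (tens (tens a b) c);
  assoc_invl : forall a b c : C, assoc_inv a b c ∘ assoc a b c = idm _;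
  assoc_invr : forall a b c : C, assoc a b c ∘ assoc_inv a b c = idm _;
  assoc_nat : forall (a a' b b' c c' : C) (f : hom a a') (g : hom b b') (h : hom c c'),
      assoc a' b' c' ∘ tensm (tensm f g) h = tensm f (tensm g h) ∘ assoc a b c;
  lunit : forall a : C, hom (tens unit a) a;
  lunit_inv : forall a : C, hom a (tens unit a);
  lunit_invl : forall a : C, lunit_inv a ∘ lunit a = idm _;
  lunit_invr : forall a : C, lunit a ∘ lunit_inv a = idm _;
  lunit_nat : forall (a b : C) (f : hom a b), lunit b ∘ tensm (idm unit) f = f ∘ lunit a;
  runit : forall a : C, hom (tens a unit) a;
  runit_inv : forall a : C, hom a (tens a unit);
  runit_invl : forall a : C, runit_inv a ∘ runit a = idm _;
  runit_invr : forall a : C, runit a ∘ runit_inv a = idm _;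
  runit_nat : forall (a b : C) (f : hom a b), runit b ∘ tensm f (idm unit) = f ∘ runit a;
  pentagon : forall a b c e : C,
      assoc a b (tens c e) ∘ assoc (tens a b) c e
      = tensm (idm a) (assoc b c e) ∘ assoc a (tens b c) e ∘ tensm (assoc a b c) (idm e);
  triangle : forall a b : C,
      tensm (idm a) (lunit b) ∘ assoc a unit b = tensm (runit a) (idm b);
  braid : forall a b : C, hom (tens a b) (tens b a);
  braid_nat : forall (a a' b b' : C) (f : hom a a') (g : hom b b'),
      braid a' b' ∘ tensm f g = tensm g f ∘ braid a b;
  braid_sym : forall a b : C, braid b a ∘ braid a b = idm (tens a b);
  hexagon : forall a b c : C,
      assoc b c a ∘ braid a (tens b c) ∘ assoc a b c
      = tensm (idm b) (braid a c) ∘ assoc b a c ∘ tensm (braid a b) (idm c)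
}.

Arguments tensm {_ _ _ _ _ _} _ _.

Notation "a ⊗ b" := (tens a b) (at level 35, right associativity) : cat_scope.
Notation "f ⊠ g" := (tensm f g) (at level 35, right associativity) : cat_scope.

(* A symmetric monoidal anti-involution (d, eta) on (C, ⊗).
   d is a functor C -> C^op: on morphisms dm f : d b -> d a for f : a -> b.
   Its strong symmetric monoidal structure, as a functor into C^op
   (whose associator/unitors/braiding are the inverses of those of C),
   is given by C-isomorphisms  mu a b : d (a ⊗ b) -> d a ⊗ d b  (the C^op
   morphism d a ⊗ d b -> d (a ⊗ b)) and  eps : d 1 -> 1  (the C^op morphism
   1 -> d 1).  All monoidal-functor axioms below are the C^op axioms
   written out in C.  eta : id => d^2 is a monoidal natural isomorphism,
   where d^2 = d^op ∘ d carries the composite monoidal structure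
   mu2 x y = dm (mu x y) ∘ mu_inv (d x) (d y) : d d x ⊗ d d y -> d d (x ⊗ y),
   eps2    = dm eps ∘ eps_inv                 : 1 -> d d 1. *)
Class AntiInv (C : Cat) (S : SMC C) := {
  d : C -> C;
  dm : forall {a b : C}, hom a b -> hom (d b) (d a);
  dm_id : forall a : C, dm (idm a) = idm (d a);
  dm_comp : forall (a b c : C) (f : hom a b) (g : hom b c), dm (g ∘ f) = dm f ∘ dm g;
  mu : forall a b : C, hom (d (a ⊗ b)) (d a ⊗ d b);
  mu_inv : forall a b : C, hom (d a ⊗ d b) (d (a ⊗ b));
  mu_invl : forall a b : C, mu_inv a b ∘ mu a b = idm _;
  mu_invr : forall a b : C, mu a b ∘ mu_inv a b = idm _;
  mu_nat : forall (a a' b b' : C) (f : hom a a') (g : hom b b'),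
      mu a b ∘ dm (f ⊠ g) = (dm f ⊠ dm g) ∘ mu a' b';
  eps : hom (d unit) unit;
  eps_inv : hom unit (d unit);
  eps_invl : eps_inv ∘ eps = idm _;
  eps_invr : eps ∘ eps_inv = idm _;
  mu_assoc : forall a b c : C,
      assoc_inv (d a) (d b) (d c) ∘ (idm (d a) ⊠ mu b c) ∘ mu a (b ⊗ c)
      = (mu a b ⊠ idm (d c)) ∘ mu (a ⊗ b) c ∘ dm (assoc a b c);
  mu_lunit : forall a : C,
      (eps ⊠ idm (d a)) ∘ mu unit a ∘ dm (lunit a) = lunit_inv (d a);
  mu_runit : forall a : C,
      (idm (d a) ⊠ eps) ∘ mu a unit ∘ dm (runit a) = runit_inv (d a);
  mu_braid : forall a b : C,
      mu a b ∘ dm (braid a b) = braid (d b) (d a) ∘ mu b a;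
  eta : forall a : C, hom a (d (d a));
  eta_inv : forall a : C, hom (d (d a)) a;
  eta_invl : forall a : C, eta_inv a ∘ eta a = idm a;
  eta_invr : forall a : C, eta a ∘ eta_inv a = idm _;
  eta_nat : forall (a b : C) (f : hom a b), eta b ∘ f = dm (dm f) ∘ eta a;
  eta_mon_tens : forall a b : C,
      eta (a ⊗ b) = dm (mu a b) ∘ mu_inv (d a) (d b) ∘ (eta a ⊠ eta b);
  eta_mon_unit : eta unit = dm eps ∘ eps_inv;
  eta_invol : forall a : C, dm (eta a) ∘ eta (d a) = idm (d a)
}.

Arguments dm {_ _ _ _ _} _.

Definition is_dual {C : Cat} {S : SMC C} (x xs : C)
    (ev : hom (xs ⊗ x) unit) (coev : hom unit (x ⊗ xs)) : Prop :=
  runit x ∘ (idm x ⊠ ev) ∘ assoc x xs x ∘ (coev ⊠ idm x) ∘ lunit_inv x = idm x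
  /\ lunit xs ∘ (ev ⊠ idm xs) ∘ assoc_inv xs x xs ∘ (idm xs ⊠ coev) ∘ runit_inv xs
     = idm xs.

(* The duality data transported along the anti-involution d:
   d (x^* ) is a dual of d x with evaluation and coevaluation obtained by
   applying d to coev_x and ev_x, the monoidal structure of d, and the braiding. *)
Definition d_ev {C : Cat} {S : SMC C} {A : AntiInv C S} (x xs : C)
    (coev : hom unit (x ⊗ xs)) : hom (d xs ⊗ d x) unit :=
  eps ∘ dm coev ∘ mu_inv x xs ∘ braid (d xs) (d x).

Definition d_coev {C : Cat} {S : SMC C} {A : AntiInv C S} (x xs : C)
    (ev : hom (xs ⊗ x) unit) : hom unit (d x ⊗ d xs) :=
  braid (d xs) (d x) ∘ mu xs x ∘ dm ev ∘ eps_inv.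

(* The map psi x compares two duals of d x: the chosen (d x)^*, and d (x^* ) with the
   evaluation and coevaluation transported along d and the braiding.  Transport along d
   turns the snake identity of x^* into its image under d, so d (x^* ) is again a dual
   and psi x is invertible, its inverse being the transpose of ev_{d x} along the
   transported coevaluation.  Naturality and the anti-involutivity axiom are equalities
   of morphisms into a dual object, and such morphisms are determined by their pairing
   with the evaluation.  After pairing, naturality becomes the image under d of the
   dinaturality of the coevaluations, and the anti-involutivity axiom says that
   transporting duality data twice along d gives back ev_x up to eta, which is the
   monoidality of eta. *)


(* Composites are kept left-associated, so a chain [p ∘ q] inside [X ∘ p ∘ q ∘ Y] is
   not a subterm; [rew E] rewrites with an equation whose left-hand side is a chain of
   up to three morphisms wherever it occurs in such a composite. *)
Lemma prefix_eq2 {C : Cat} {a b c : C} {p : hom b c} {q : hom a b} {r : hom a c}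
  (E : p ∘ q = r) {z : C} (X : hom c z) : X ∘ p ∘ q = X ∘ r.
Proof. rewrite <- comp_assoc, E; reflexivity. Qed.

Lemma prefix_eq3 {C : Cat} {a b c e : C} {p : hom c e} {q : hom b c} {s : hom a b}
  {r : hom a e} (E : p ∘ q ∘ s = r) {z : C} (X : hom e z) : X ∘ p ∘ q ∘ s = X ∘ r.
Proof. rewrite <- E, !comp_assoc; reflexivity. Qed.

Ltac assoc_norm := rewrite ?comp_assoc, ?comp_idl, ?comp_idr.

Ltac rewrite_in_chain E :=
  first [ rewrite (prefix_eq3 E) | rewrite (prefix_eq2 E) | rewrite E ].

Ltac chain_rewrite E :=
  lazymatch type of E with
  | forall _, _ => let F := open_constr:(E _) in chain_rewrite F
  | _ => rewrite_in_chain E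
  end.

Ltac chain_rewrite_rev E :=
  lazymatch type of E with
  | forall _, _ => let F := open_constr:(E _) in chain_rewrite_rev F
  | _ => rewrite_in_chain (eq_sym E)
  end.

Tactic Notation "rew" open_constr(E) := assoc_norm; chain_rewrite E; assoc_norm.
Tactic Notation "rew" "<-" open_constr(E) := assoc_norm; chain_rewrite_rev E; assoc_norm.

Section Category.
Context {C : Cat}.

Lemma cancel_split_epi {a b c : C} (f g : hom b c) (p : hom a b) (q : hom b a) :
  p ∘ q = idm b -> f ∘ p = g ∘ p -> f = g.
Proof.
  intros pq E.
  rewrite <- (comp_idr _ _ _ f), <- (comp_idr _ _ _ g), <- pq, !comp_assoc, E.
  reflexivity.
Qed.

Lemma cancel_split_mono {a b c : C} (f g : hom a b) (p : hom b c) (q : hom c b) :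
  q ∘ p = idm b -> p ∘ f = p ∘ g -> f = g.
Proof.
  intros qp E.
  rewrite <- (comp_idl _ _ _ f), <- (comp_idl _ _ _ g), <- qp, <- !comp_assoc, E.
  reflexivity.
Qed.

Lemma inverse_unique {a b : C} (f : hom a b) (g h : hom b a) :
  g ∘ f = idm a -> f ∘ h = idm b -> g = h.
Proof.
  intros gf fh.
  rewrite <- (comp_idr _ _ _ g), <- fh, comp_assoc, gf, comp_idl; reflexivity.
Qed.

Lemma inverse_square {a b a' b' : C} (u : hom a a') (u' : hom a' a)
    (v : hom b b') (v' : hom b' b) (f : hom a b) (g : hom a' b') :
  u ∘ u' = idm a' -> v' ∘ v = idm b -> g ∘ u = v ∘ f -> v' ∘ g = f ∘ u'.
Proof.
  intros uu' v'v E.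
  rewrite <- (comp_idr _ _ _ g), <- uu'. assoc_norm. rew E. rewrite v'v. assoc_norm.
  reflexivity.
Qed.

End Category.

Section Monoidal.
Context {C : Cat} {S : SMC C}.

Lemma tensm_comp_l {a b c e : C} (g : hom b c) (f : hom a b) :
  (g ∘ f) ⊠ idm e = (g ⊠ idm e) ∘ (f ⊠ idm e).
Proof. rewrite <- tensm_comp, comp_idl; reflexivity. Qed.

Lemma tensm_comp_r {a b c e : C} (g : hom b c) (f : hom a b) :
  idm e ⊠ (g ∘ f) = (idm e ⊠ g) ∘ (idm e ⊠ f).
Proof. rewrite <- tensm_comp, comp_idl; reflexivity. Qed.

Lemma tensm_split_l {a b c e : C} (f : hom a b) (g : hom c e) :
  f ⊠ g = (f ⊠ idm e) ∘ (idm a ⊠ g).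
Proof. rewrite <- tensm_comp, comp_idl, comp_idr; reflexivity. Qed.

Lemma tensm_split_r {a b c e : C} (f : hom a b) (g : hom c e) :
  f ⊠ g = (idm b ⊠ g) ∘ (f ⊠ idm c).
Proof. rewrite <- tensm_comp, comp_idl, comp_idr; reflexivity. Qed.

Lemma tensm_swap {a b c e : C} (f : hom a b) (g : hom c e) :
  (idm b ⊠ g) ∘ (f ⊠ idm c) = (f ⊠ idm e) ∘ (idm a ⊠ g).
Proof. rewrite <- tensm_split_l, <- tensm_split_r; reflexivity. Qed.

Lemma tensm_inv_l {a b c : C} (f : hom a b) (g : hom b a) :
  g ∘ f = idm a -> (g ⊠ idm c) ∘ (f ⊠ idm c) = idm (a ⊗ c).
Proof. intros gf. rewrite <- tensm_comp_l, gf, tensm_id; reflexivity. Qed.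

Lemma tensm_inv_r {a b c : C} (f : hom a b) (g : hom b a) :
  g ∘ f = idm a -> (idm c ⊠ g) ∘ (idm c ⊠ f) = idm (c ⊗ a).
Proof. intros gf. rewrite <- tensm_comp_r, gf, tensm_id; reflexivity. Qed.

Lemma assoc_inv_nat (a a' b b' c c' : C) (f : hom a a') (g : hom b b') (h : hom c c') :
  assoc_inv a' b' c' ∘ (f ⊠ (g ⊠ h)) = ((f ⊠ g) ⊠ h) ∘ assoc_inv a b c.
Proof.
  apply (inverse_square (assoc a b c) _ (assoc a' b' c'));
    [apply assoc_invr | apply assoc_invl | symmetry; apply assoc_nat].
Qed.

Lemma lunit_inv_nat (a b : C) (f : hom a b) :
  lunit_inv b ∘ f = (idm unit ⊠ f) ∘ lunit_inv a.
Proof.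
  apply (inverse_square (lunit a) _ (lunit b));
    [apply lunit_invr | apply lunit_invl | symmetry; apply lunit_nat].
Qed.

Lemma runit_inv_nat (a b : C) (f : hom a b) :
  runit_inv b ∘ f = (f ⊠ idm unit) ∘ runit_inv a.
Proof.
  apply (inverse_square (runit a) _ (runit b));
    [apply runit_invr | apply runit_invl | symmetry; apply runit_nat].
Qed.

Lemma tensm_unit_l_inj (a b : C) (f g : hom a b) : idm unit ⊠ f = idm unit ⊠ g -> f = g.
Proof.
  intros E. apply (cancel_split_epi _ _ (lunit a) (lunit_inv a)); [apply lunit_invr|].
  rewrite <- !lunit_nat, E; reflexivity.
Qed.

Lemma tensm_unit_r_inj (a b : C) (f g : hom a b) : f ⊠ idm unit = g ⊠ idm unit -> f = g.
Proof.
  intros E. apply (cancel_split_epi _ _ (runit a) (runit_inv a)); [apply runit_invr|].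
  rewrite <- !runit_nat, E; reflexivity.
Qed.

Lemma lunit_tens (a b : C) : lunit (a ⊗ b) ∘ assoc unit a b = lunit a ⊠ idm b.
Proof.
  apply tensm_unit_l_inj.
  apply (cancel_split_epi _ _ (assoc unit (unit ⊗ a) b ∘ (assoc unit unit a ⊠ idm b))
           ((assoc_inv unit unit a ⊠ idm b) ∘ assoc_inv unit (unit ⊗ a) b)).
  { assoc_norm. rew <- tensm_comp_l. rewrite assoc_invr, tensm_id. assoc_norm.
    apply assoc_invr. }
  rewrite tensm_comp_r. assoc_norm.
  rew <- (pentagon unit unit a b).
  rew (triangle unit (a ⊗ b)).
  rewrite <- (tensm_id a b), <- assoc_nat, <- (triangle unit a), tensm_comp_l. assoc_norm.
  rewrite assoc_nat; reflexivity.
Qed.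

Lemma lunit_unit_tens (a : C) : lunit (unit ⊗ a) = idm unit ⊠ lunit a.
Proof.
  apply (cancel_split_mono _ _ (lunit a) (lunit_inv a)); [apply lunit_invl|].
  rewrite lunit_nat; reflexivity.
Qed.

Lemma lunit_unit : lunit unit = runit unit.
Proof.
  apply tensm_unit_r_inj. rewrite <- triangle, <- lunit_tens, lunit_unit_tens; reflexivity.
Qed.

Lemma runit_tens (a b : C) : (idm a ⊠ runit b) ∘ assoc a b unit = runit (a ⊗ b).
Proof.
  apply tensm_unit_r_inj. symmetry.
  rewrite <- (triangle (a ⊗ b) unit), <- (tensm_id a b).
  apply (cancel_split_mono _ _ (assoc a b unit) (assoc_inv a b unit)); [apply assoc_invl|].
  assoc_norm. rew assoc_nat. rew pentagon. rew <- tensm_comp_r. rewrite triangle.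
  rew <- assoc_nat. rewrite tensm_comp_l. assoc_norm. reflexivity.
Qed.

Lemma lunit_inv_tens (a b : C) : lunit_inv a ⊠ idm b = assoc_inv unit a b ∘ lunit_inv (a ⊗ b).
Proof.
  apply (inverse_unique (lunit a ⊠ idm b)).
  - apply tensm_inv_l, lunit_invl.
  - rewrite <- lunit_tens. assoc_norm. rew assoc_invr. apply lunit_invr.
Qed.

Lemma lunit_inv_unit : lunit_inv unit = runit_inv unit.
Proof.
  apply (inverse_unique (lunit unit)); [apply lunit_invl|].
  rewrite lunit_unit; apply runit_invr.
Qed.

Lemma runit_inv_tens (a b : C) : assoc a b unit ∘ runit_inv (a ⊗ b) = idm a ⊠ runit_inv b.
Proof.
  symmetry. apply (inverse_unique (idm a ⊠ runit b)).
  - apply tensm_inv_r, runit_invl.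
  - rew runit_tens. apply runit_invr.
Qed.

Lemma triangle_inv (a b : C) : (runit a ⊠ idm b) ∘ assoc_inv a unit b = idm a ⊠ lunit b.
Proof. rewrite <- triangle. assoc_norm. rew assoc_invr. reflexivity. Qed.

Lemma pentagon_inv (a b c e : C) :
  (assoc a b c ⊠ idm e) ∘ assoc_inv (a ⊗ b) c e
  = assoc_inv a (b ⊗ c) e ∘ (idm a ⊠ assoc_inv b c e) ∘ assoc a b (c ⊗ e).
Proof.
  apply (cancel_split_mono _ _ (assoc a (b ⊗ c) e) (assoc_inv a (b ⊗ c) e));
    [apply assoc_invl|].
  apply (cancel_split_mono _ _ (idm a ⊠ assoc b c e) (idm a ⊠ assoc_inv b c e));
    [apply tensm_inv_r, assoc_invl|].
  apply (cancel_split_epi _ _ (assoc (a ⊗ b) c e) (assoc_inv (a ⊗ b) c e));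
    [apply assoc_invr|].
  rew assoc_invl. rew pentagon. rew assoc_invr.
  rew <- tensm_comp_r. rewrite assoc_invl, tensm_id. assoc_norm. reflexivity.
Qed.

Lemma hexagon_inv (a b c : C) :
  assoc_inv a b c ∘ braid (b ⊗ c) a ∘ assoc_inv b c a
  = (braid b a ⊠ idm c) ∘ assoc_inv b a c ∘ (idm b ⊠ braid c a).
Proof.
  apply (inverse_unique (assoc b c a ∘ braid a (b ⊗ c) ∘ assoc a b c)).
  - rew assoc_invl. rew braid_sym. apply assoc_invl.
  - rewrite hexagon. rew <- tensm_comp_l. rewrite braid_sym, tensm_id. assoc_norm.
    rew assoc_invr. rewrite <- tensm_comp_r, braid_sym; apply tensm_id.
Qed.

Lemma hexagon' (a b c : C) :
  braid a (b ⊗ c) ∘ assoc a b c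
  = assoc_inv b c a ∘ (idm b ⊠ braid a c) ∘ assoc b a c ∘ (braid a b ⊠ idm c).
Proof.
  apply (cancel_split_mono _ _ (assoc b c a) (assoc_inv b c a)); [apply assoc_invl|].
  rew hexagon. rew assoc_invr. reflexivity.
Qed.

Lemma braid_unit_r (a : C) : lunit a ∘ braid a unit = runit a.
Proof.
  apply tensm_unit_r_inj.
  apply (cancel_split_mono _ _ (braid a unit) (braid unit a)); [apply braid_sym|].
  symmetry. rewrite <- (triangle a unit).
  rew (braid_nat a a (unit ⊗ unit) unit (idm a) (lunit unit)).
  rew <- lunit_tens. rew hexagon. rew lunit_nat. rew lunit_tens. rew <- tensm_comp_l.
  reflexivity.
Qed.

Lemma braid_unit_l (a : C) : runit a ∘ braid unit a = lunit a.
Proof. rewrite <- braid_unit_r. rew braid_sym. reflexivity. Qed.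

Lemma braid_lunit_inv (a : C) : braid unit a ∘ lunit_inv a = runit_inv a.
Proof.
  symmetry. apply (inverse_unique (runit a)); [apply runit_invl|].
  rew braid_unit_l. apply lunit_invr.
Qed.

Lemma hexagon_cyclic (x y z : C) :
  assoc_inv y z x ∘ braid (z ⊗ x) y ∘ assoc_inv z x y ∘ braid (x ⊗ y) z
  = braid x (y ⊗ z) ∘ assoc x y z.
Proof.
  rew hexagon_inv. rew <- (braid_nat (x ⊗ y) (y ⊗ x) z z (braid x y) (idm z)).
  rewrite hexagon'. f_equal.
  apply (cancel_split_epi _ _ (assoc_inv y x z) (assoc y x z)); [apply assoc_invl|].
  rew hexagon_inv. rew <- tensm_comp_l. rewrite braid_sym, tensm_id. assoc_norm.
  rew assoc_invr. reflexivity.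
Qed.

End Monoidal.

Section Duals.
Context {C : Cat} {S : SMC C}.

(* Up to conversion, the two snake identities of [is_dual x s e c] read
   [dual_cocurry e c = idm x] and [dual_curry c e = idm s]. *)
Definition dual_curry {x s y : C} (c : hom unit (x ⊗ s)) (k : hom (y ⊗ x) unit) : hom y s :=
  lunit s ∘ (k ⊠ idm s) ∘ assoc_inv y x s ∘ (idm y ⊠ c) ∘ runit_inv y.

Definition dual_cocurry {x s y : C} (e : hom (s ⊗ x) unit) (h : hom unit (y ⊗ s)) : hom x y :=
  runit y ∘ (idm y ⊠ e) ∘ assoc y s x ∘ (h ⊠ idm x) ∘ lunit_inv x.

Lemma dual_curry_ev {x s : C} {e : hom (s ⊗ x) unit} {c : hom unit (x ⊗ s)} :
  is_dual x s e c -> dual_curry c e = idm s.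
Proof. intros [_ snake]; exact snake. Qed.

Lemma dual_cocurry_coev {x s : C} {e : hom (s ⊗ x) unit} {c : hom unit (x ⊗ s)} :
  is_dual x s e c -> dual_cocurry e c = idm x.
Proof. intros [snake _]; exact snake. Qed.

Lemma dual_curry_comp {x s y y' : C} (c : hom unit (x ⊗ s)) (k : hom (y ⊗ x) unit)
    (g : hom y' y) :
  dual_curry c k ∘ g = dual_curry c (k ∘ (g ⊠ idm x)).
Proof.
  unfold dual_curry. rewrite tensm_comp_l. rew <- assoc_inv_nat. rewrite tensm_id.
  rew <- tensm_swap. rew <- runit_inv_nat. reflexivity.
Qed.

Lemma comp_dual_curry {x s s' y : C} (c : hom unit (x ⊗ s)) (k : hom (y ⊗ x) unit)
    (p : hom s s') :
  p ∘ dual_curry c k = dual_curry ((idm x ⊠ p) ∘ c) k.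
Proof.
  unfold dual_curry. rew <- lunit_nat. rew tensm_swap. rewrite <- (tensm_id y x).
  rew <- assoc_inv_nat. rew <- tensm_comp_r. reflexivity.
Qed.

Lemma dual_ev_inj {x s y : C} {e : hom (s ⊗ x) unit} {c : hom unit (x ⊗ s)}
    (g h : hom y s) :
  is_dual x s e c -> e ∘ (g ⊠ idm x) = e ∘ (h ⊠ idm x) -> g = h.
Proof.
  intros D E.
  rewrite <- (comp_idl _ _ _ g), <- (comp_idl _ _ _ h), <- (dual_curry_ev D),
    !dual_curry_comp, E.
  reflexivity.
Qed.

Lemma dual_comparison_iso {x s s' : C} (e : hom (s ⊗ x) unit) (c : hom unit (x ⊗ s))
    (e' : hom (s' ⊗ x) unit) (c' : hom unit (x ⊗ s')) (p : hom s s') :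
  dual_curry c e = idm s -> dual_curry c' e' = idm s' ->
  e' ∘ (p ⊠ idm x) = e -> (idm x ⊠ p) ∘ c = c' ->
  dual_curry c e' ∘ p = idm s /\ p ∘ dual_curry c e' = idm s'.
Proof.
  intros snake snake' pe pc. split.
  - rewrite dual_curry_comp, pe; exact snake.
  - rewrite comp_dual_curry, pc; exact snake'.
Qed.

Lemma dual_cocurry_comp {x x' s y : C} (e : hom (s ⊗ x) unit) (h : hom unit (y ⊗ s))
    (f : hom x' x) :
  dual_cocurry e h ∘ f = dual_cocurry (e ∘ (idm s ⊠ f)) h.
Proof.
  unfold dual_cocurry. rew lunit_inv_nat. rew <- tensm_swap. rewrite <- (tensm_id y s).
  rew assoc_nat. rew <- tensm_comp_r. reflexivity.
Qed.

Lemma comp_dual_cocurry {x s y y' : C} (e : hom (s ⊗ x) unit) (h : hom unit (y ⊗ s))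
    (f : hom y y') :
  f ∘ dual_cocurry e h = dual_cocurry e ((f ⊠ idm s) ∘ h).
Proof.
  unfold dual_cocurry. rew <- runit_nat. rew <- tensm_swap. rewrite <- (tensm_id s x).
  rew <- assoc_nat. rew <- tensm_comp_l. reflexivity.
Qed.

Lemma dual_cocurry_whisker {x s s' y : C} (e : hom (s ⊗ x) unit) (h : hom unit (y ⊗ s'))
    (g : hom s' s) :
  dual_cocurry e ((idm y ⊠ g) ∘ h) = dual_cocurry (e ∘ (g ⊠ idm x)) h.
Proof.
  unfold dual_cocurry. rewrite tensm_comp_l, tensm_comp_r. rew assoc_nat. reflexivity.
Qed.

Lemma dual_cocurryK {x s y : C} (e : hom (s ⊗ x) unit) (c : hom unit (x ⊗ s))
    (h : hom unit (y ⊗ s)) :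
  dual_curry c e = idm s -> (dual_cocurry e h ⊠ idm s) ∘ c = h.
Proof.
  intros snake. unfold dual_cocurry. rewrite !tensm_comp_l, lunit_inv_tens.
  rew lunit_inv_nat. rewrite lunit_inv_unit.
  rew <- assoc_inv_nat. rewrite tensm_id. rew <- tensm_swap. rew <- runit_inv_nat.
  rew pentagon_inv. rew <- assoc_inv_nat. rew triangle_inv.
  rewrite <- (tensm_id y s). rew assoc_nat. rew runit_inv_tens.
  rewrite <- !tensm_comp_r. assoc_norm. unfold dual_curry in snake.
  rewrite snake, tensm_id, comp_idl. reflexivity.
Qed.

Lemma dual_cocurry_inj {x s y : C} {e : hom (s ⊗ x) unit} {c : hom unit (x ⊗ s)}
    (h h' : hom unit (y ⊗ s)) :
  is_dual x s e c -> dual_cocurry e h = dual_cocurry e h' -> h = h'.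
Proof.
  intros D E.
  rewrite <- (dual_cocurryK e c h), <- (dual_cocurryK e c h'), E by apply (dual_curry_ev D).
  reflexivity.
Qed.

Lemma coev_mate {x y sx sy : C} (ex : hom (sx ⊗ x) unit) (cx : hom unit (x ⊗ sx))
    (ey : hom (sy ⊗ y) unit) (cy : hom unit (y ⊗ sy)) (f : hom x y) (g : hom sy sx) :
  is_dual x sx ex cx -> dual_cocurry ey cy = idm y ->
  ex ∘ (g ⊠ idm x) = ey ∘ (idm sy ⊠ f) ->
  (idm y ⊠ g) ∘ cy = (f ⊠ idm sx) ∘ cx.
Proof.
  intros Dx snake_y E. apply (dual_cocurry_inj _ _ Dx).
  rewrite dual_cocurry_whisker, E, <- dual_cocurry_comp, snake_y, <- comp_dual_cocurry,
    (dual_cocurry_coev Dx), comp_idl, comp_idr.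
  reflexivity.
Qed.

Lemma dual_curry_braid {a b : C} (e : hom (a ⊗ b) unit) (c : hom unit (b ⊗ a)) :
  dual_curry (braid b a ∘ c) (e ∘ braid b a) = dual_cocurry e c.
Proof.
  unfold dual_curry, dual_cocurry. rewrite tensm_comp_l, tensm_comp_r.
  rew <- hexagon_inv. rewrite <- braid_lunit_inv.
  rew <- (braid_nat unit (b ⊗ a) b b c (idm b)).
  rewrite <- braid_unit_r. rew (braid_nat b b (a ⊗ b) unit (idm b) e).
  rew <- hexagon_cyclic. reflexivity.
Qed.

End Duals.

Section AntiInvolution.
Context {C : Cat} {S : SMC C} {A : AntiInv C S}.

Lemma mu_inv_nat (a a' b b' : C) (f : hom a a') (g : hom b b') :
  mu_inv a b ∘ (dm f ⊠ dm g) = dm (f ⊠ g) ∘ mu_inv a' b'.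
Proof.
  apply (inverse_square (mu a' b') _ (mu a b));
    [apply mu_invr | apply mu_invl | symmetry; apply mu_nat].
Qed.

Lemma mu_inv_nat_l (a a' b : C) (f : hom a a') :
  mu_inv a b ∘ (dm f ⊠ idm (d b)) = dm (f ⊠ idm b) ∘ mu_inv a' b.
Proof. rewrite <- mu_inv_nat, dm_id; reflexivity. Qed.

Lemma mu_inv_nat_r (a b b' : C) (g : hom b b') :
  mu_inv a b ∘ (idm (d a) ⊠ dm g) = dm (idm a ⊠ g) ∘ mu_inv a b'.
Proof. rewrite <- mu_inv_nat, dm_id; reflexivity. Qed.

Lemma mu_nat_r (a b b' : C) (g : hom b b') :
  (idm (d a) ⊠ dm g) ∘ mu a b' = mu a b ∘ dm (idm a ⊠ g).
Proof. rewrite mu_nat, dm_id; reflexivity. Qed.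

Lemma mu_inv_braid (a b : C) :
  dm (braid a b) ∘ mu_inv b a = mu_inv a b ∘ braid (d b) (d a).
Proof.
  symmetry. apply (inverse_square (mu b a) _ (mu a b));
    [apply mu_invr | apply mu_invl | symmetry; apply mu_braid].
Qed.

Lemma dm_lunit (s : C) :
  mu_inv unit s ∘ (eps_inv ⊠ idm (d s)) ∘ lunit_inv (d s) = dm (lunit s).
Proof.
  rewrite <- mu_lunit. rew <- tensm_comp_l. rewrite eps_invl, tensm_id. assoc_norm.
  rew mu_invl. reflexivity.
Qed.

Lemma dm_runit_inv (s : C) :
  runit (d s) ∘ (idm (d s) ⊠ eps) ∘ mu s unit = dm (runit_inv s).
Proof.
  apply (cancel_split_epi _ _ (dm (runit s)) (dm (runit_inv s))).
  { rewrite <- dm_comp, runit_invl; apply dm_id. }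
  rewrite <- dm_comp, runit_invr, dm_id. rew mu_runit. apply runit_invr.
Qed.

Lemma mu_assoc_inv (a b c : C) :
  (idm (d a) ⊠ mu_inv b c) ∘ assoc (d a) (d b) (d c) ∘ (mu a b ⊠ idm (d c))
  = mu a (b ⊗ c) ∘ dm (assoc_inv a b c) ∘ mu_inv (a ⊗ b) c.
Proof.
  apply (cancel_split_mono _ _ (assoc_inv (d a) (d b) (d c) ∘ (idm (d a) ⊠ mu b c))
           ((idm (d a) ⊠ mu_inv b c) ∘ assoc (d a) (d b) (d c))).
  { rew assoc_invr. apply tensm_inv_r, mu_invl. }
  rew mu_assoc. rew <- dm_comp. rewrite assoc_invl, dm_id. assoc_norm. rew mu_invr.
  rew <- tensm_comp_r. rewrite mu_invr, tensm_id. assoc_norm. rew assoc_invl.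
  reflexivity.
Qed.

Lemma dm_mu_eta (a b : C) :
  dm (mu a b) ∘ mu_inv (d a) (d b) = eta (a ⊗ b) ∘ (eta_inv a ⊠ eta_inv b).
Proof.
  rewrite eta_mon_tens. rew <- tensm_comp. rewrite !eta_invr, tensm_id. assoc_norm.
  reflexivity.
Qed.

Lemma dual_curry_d {x s : C} (e : hom (s ⊗ x) unit) (c : hom unit (x ⊗ s)) :
  dual_curry (d_coev x s e) (d_ev x s c) = dm (dual_curry c e).
Proof.
  replace (d_coev x s e) with (braid (d s) (d x) ∘ (mu s x ∘ dm e ∘ eps_inv))
    by (unfold d_coev; assoc_norm; reflexivity).
  unfold d_ev. rewrite dual_curry_braid. unfold dual_cocurry, dual_curry.
  rewrite !tensm_comp_r, !tensm_comp_l. rew mu_assoc_inv. rew mu_nat_r. rew mu_inv_nat_l.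
  rewrite dm_runit_inv. rew dm_lunit. rewrite !dm_comp. assoc_norm. reflexivity.
Qed.

Lemma d_ev_whisker_r {y s s' : C} (c : hom unit (y ⊗ s)) (g : hom s s') :
  d_ev y s' ((idm y ⊠ g) ∘ c) = d_ev y s c ∘ (dm g ⊠ idm (d y)).
Proof.
  unfold d_ev. rewrite dm_comp. rew <- mu_inv_nat_r. rew <- braid_nat. reflexivity.
Qed.

Lemma d_ev_whisker_l {x y s : C} (c : hom unit (x ⊗ s)) (f : hom x y) :
  d_ev y s ((f ⊠ idm s) ∘ c) = d_ev x s c ∘ (idm (d s) ⊠ dm f).
Proof.
  unfold d_ev. rewrite dm_comp. rew <- mu_inv_nat_l. rew <- braid_nat. reflexivity.
Qed.

Lemma d_ev_d_coev_eta {x s : C} (e : hom (s ⊗ x) unit) :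
  d_ev (d x) (d s) (d_coev x s e) ∘ (idm (d (d s)) ⊠ eta x) = e ∘ (eta_inv s ⊠ idm x).
Proof.
  unfold d_ev, d_coev. rewrite !dm_comp. rew mu_inv_braid. rew braid_sym.
  rew dm_mu_eta. rew <- eta_nat. rewrite eta_mon_unit. rew <- dm_comp.
  rewrite eps_invr, dm_id. assoc_norm. rewrite eps_invr, comp_idl.
  rew <- tensm_comp. rewrite eta_invl. reflexivity.
Qed.

End AntiInvolution.

Theorem mainTheorem11
  (C : Cat) (S : SMC C) (A : AntiInv C S)
  (* a choice of duals for every object: the dual functor on objects *)
  (star : C -> C)
  (ev : forall x : C, hom (star x ⊗ x) unit)
  (coev : forall x : C, hom unit (x ⊗ star x))
  (Hdual : forall x : C, is_dual x (star x) (ev x) (coev x))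
  (* the dual functor on morphisms: f^* is the unique morphism with
     ev_x ∘ (f^* ⊗ id) = ev_y ∘ (id ⊗ f) *)
  (starm : forall x y : C, hom x y -> hom (star y) (star x))
  (Hstarm : forall (x y : C) (f : hom x y),
      ev x ∘ (starm x y f ⊠ idm x) = ev y ∘ (idm (star y) ⊠ f))
  (* psi x : d (x^* ) -> (d x)^*  is the uniqueness-of-duals isomorphism
     between the two duals d (x^* ) and (d x)^* of d x, i.e. the one
     compatible with the evaluations and coevaluations *)
  (psi : forall x : C, hom (d (star x)) (star (d x)))
  (Hpsi_ev : forall x : C,
      ev (d x) ∘ (psi x ⊠ idm (d x)) = d_ev x (star x) (coev x))
  (Hpsi_coev : forall x : C,
      (idm (d x) ⊠ psi x) ∘ d_coev x (star x) (ev x) = coev (d x)) :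
  (* psi is a natural isomorphism  d ∘ (.)^* => (.)^* ∘ d ... *)
  (forall (x y : C) (f : hom x y),
      psi y ∘ dm (starm x y f) = starm (d y) (d x) (dm f) ∘ psi x)
  /\ (forall x : C, exists g : hom (star (d x)) (d (star x)),
        g ∘ psi x = idm _ /\ psi x ∘ g = idm _)
  (* ... satisfying the anti-involutive functor axiom
     phi_{d x} ∘ F(eta_x) = d(phi_x) ∘ eta'_{F x} in C^op, with eta' = eta^{-1},
     written out in C: *)
  /\ (forall x : C,
      starm x (d (d x)) (eta x) ∘ psi (d x) = eta_inv (star x) ∘ dm (psi x)).
Proof.
  split; [|split].
  - intros x y f. apply (dual_ev_inj _ _ (Hdual (d y))).
    rewrite !tensm_comp_l. assoc_norm. rewrite Hpsi_ev, Hstarm. rew tensm_swap.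
    rewrite Hpsi_ev, <- d_ev_whisker_r, <- d_ev_whisker_l.
    rewrite (coev_mate _ _ _ _ f _ (Hdual x) (dual_cocurry_coev (Hdual y)) (Hstarm x y f)).
    reflexivity.
  - intros x. exists (dual_curry (d_coev x (star x) (ev x)) (ev (d x))).
    apply (dual_comparison_iso (d_ev x (star x) (coev x)) _ _ (coev (d x)));
      [| apply (dual_curry_ev (Hdual (d x))) | apply Hpsi_ev | apply Hpsi_coev].
    rewrite dual_curry_d, (dual_curry_ev (Hdual x)). apply dm_id.
  - intros x. apply (dual_ev_inj _ _ (Hdual x)).
    rewrite !tensm_comp_l. assoc_norm. rewrite Hstarm. rew tensm_swap.
    rewrite Hpsi_ev, <- Hpsi_coev, d_ev_whisker_r. rew <- tensm_swap.
    rewrite d_ev_d_coev_eta. reflexivity.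
Qed.
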